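(* For $n\ge 1$, the symmetric double star $D_n$ satisfies $\nu^*(D_n)=10n^2+10n+3$.
   Context: For a finite simple graph $G=(V,E)$ with $\ell=|V|+|E|$, a construction sequence (c-sequence) is a bijection $x:\{1,\dots,\ell\}\to V\sqcup E$ such that every edge $e=uw$ satisfies $x^{-1}(e)>\max\{x^{-1}(u),x^{-1}(w)\}$. The cost of $x$ is $\nu(x)=\sum_{e=uw\in E}\big(2x^{-1}(e)-x^{-1}(u)-x^{-1}(w)\big)$, and $\nu^*(G)$ is the maximum of $\nu(x)$ over all c-sequences for $G$. The symmetric double star $D_n$ is the graph formed from two disjoint copies of the star $K_{1,n}$ by adding an edge joining their two hubs. *)

From mathcomp Require Import all_boot.
Set Implicit Arguments. Unset Strict Implicit. Unset Printing Implicit Defensive.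

Section CSeq.
Variables (T : finType) (e : rel T).

Definition simple_graph : Prop := symmetric e /\ irreflexive e.

Definition is_edge (s : {set T}) : bool :=
  [exists u : T, exists w : T, e u w && (s == [set u; w])].

Definition edge_type := {s : {set T} | is_edge s}.

Definition elt := (T + edge_type)%type.

Definition ell : nat := #|{: elt}|.

(* A candidate sequence x : {1..ell} -> V ⊔ E, indexed by 'I_ell
   (position i : 'I_ell is the (i+1)-th entry). *)
Definition seqtype := {ffun 'I_ell -> elt}.

(* x^{-1}(a), 1-based. *)
Definition pos (x : seqtype) (a : elt) : nat :=
  (index a [seq x i | i <- enum 'I_ell]).+1.

Definition cseq (x : seqtype) : bool :=
  injectiveb x && (* injective from 'I_ell onto a type of size ell: a bijection *)
  [forall s : edge_type, forall u : T,
      (u \in val s) ==> (pos x (inl u) < pos x (inr s))].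

(* For an edge s = {u, w}, 2 x^{-1}(s) - x^{-1}(u) - x^{-1}(w)
   (nonnegative for c-sequences, so nat subtraction is exact there). *)
Definition cost (x : seqtype) : nat :=
  \sum_(s : edge_type)
     (2 * pos x (inr s) - \sum_(u in val s) pos x (inl u)).

Definition nu_star : nat := \max_(x : seqtype | cseq x) cost x.

End CSeq.

(* Symmetric double star D_n: vertices (b, None) are the two hubs (b : bool),
   vertices (b, Some i) are the n leaves attached to hub b. *)
Definition ds_vertex (n : nat) := (bool * option 'I_n)%type.

Definition double_star (n : nat) : rel (ds_vertex n) :=
  fun v w =>
    match v.2, w.2 with
    | None, None => v.1 != w.1
    | None, Some _ => v.1 == w.1
    | Some _, None => v.1 == w.1
    | Some _, Some _ => false
    end.
Arguments double_star : clear implicits.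

Lemma double_star_simple n : simple_graph (double_star n).
Proof.
split.
- by move=> [b [i|]] [c [j|]]; rewrite /double_star /= // eq_sym.
- by move=> [b [i|]]; rewrite /double_star /= ?eqxx.
Qed.

From mathcomp Require Import all_boot zify.
Set Implicit Arguments. Unset Strict Implicit. Unset Printing Implicit Defensive.

(* Summing 2 x^-1(uw) - x^-1(u) - x^-1(w) over the edges and adding the sum of all
   positions, which is l(l+1)/2, gives the identity
     cost x + sum_v (deg v + 2) x^-1(v) = l (l + 1),
   so maximising the cost means minimising a weighted sum of the vertex positions.
   In D_n the weight is 3 for a leaf and n + 3 for a hub; the positions are distinct
   and positive, so the weighted sum is at least 3 (1 + ... + (2n+2)) + n (1 + 2), with
   equality for the sequence listing the two hubs, then the leaves, then all edges.
   With l = 4n + 3 this gives 10n^2 + 10n + 3. *)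

Lemma big_option (R : Type) (idx : R) (op : Monoid.law idx) (I : finType)
    (F : option I -> R) :
  \big[op/idx]_o F o = op (F None) (\big[op/idx]_i F (Some i)).
Proof.
by rewrite ![index_enum _]unlock [@Finite.enum in LHS]unlock /= big_cons big_map.
Qed.

Lemma sum_succ_ord (m : nat) : (\sum_(k < m) k.+1) * 2 = m * m.+1.
Proof. by elim: m => [|m IH]; rewrite ?big_ord0 // big_ord_recr /= mulnDl IH; lia. Qed.

Lemma sorted_ltn_nth_geq (t : seq nat) i : sorted ltn t -> i < size t -> i <= nth 0 t i.
Proof.
move=> St; elim: i => // i IH lt_i1; apply: leq_ltn_trans (IH (ltnW lt_i1)) _.
by apply: (sorted_ltn_nth ltn_trans) => //; rewrite inE ltnW.
Qed.

Lemma sum_uniq_nat_geq (s : seq nat) : uniq s -> \sum_(k < size s) k <= \sum_(a <- s) a.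
Proof.
move=> Us; set t := sort leq s.
have Ps : perm_eq t s by rewrite perm_sort.
have St : sorted ltn t.
  by rewrite ltn_sorted_uniq_leq sort_uniq Us sort_sorted //; exact: leq_total.
rewrite -(perm_big _ Ps) -(perm_size Ps) (big_nth 0) big_mkord.
by apply: leq_sum => i _; exact: sorted_ltn_nth_geq.
Qed.

Lemma sum_inj_pos_geq (I : finType) (f : I -> nat) :
  injective f -> (forall i, 0 < f i) -> \sum_(k < #|I|) k.+1 <= \sum_i f i.
Proof.
move=> f_inj f_pos; have predf_inj : injective (predn \o f).
  by move=> i j /= eq_ij; apply: f_inj; rewrite -(prednK (f_pos i)) eq_ij prednK.
have le_pred : \sum_(k < #|I|) k <= \sum_i (f i).-1.
  have := sum_uniq_nat_geq (etrans (map_inj_uniq predf_inj _) (index_enum_uniq I)).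
  by rewrite size_map cardT enumT big_map.
have -> : \sum_i f i = \sum_i (f i).-1 + #|I|.
  by rewrite -sum1_card -big_split; apply: eq_bigr => i _; rewrite /= addn1 prednK.
have -> : \sum_(k < #|I|) k.+1 = \sum_(k < #|I|) k + #|I|.
  rewrite (eq_bigr (fun k : 'I__ => k + 1)) => [|k _]; last by rewrite addn1.
  by rewrite big_split /= sum1_card card_ord.
by rewrite leq_add2r.
Qed.

Section Degree.
Variables (T : finType) (e : rel T).

Definition deg (v : T) : nat := #|[set s : edge_type e | v \in val s]|.

Lemma edge_endpoints (s : edge_type e) : exists u w, e u w /\ val s = [set u; w].
Proof.
case: s => S HS /=; case/existsP: HS => u /existsP [w /andP [euw /eqP ->]].
by exists u, w.
Qed.

Lemma card_edge_le2 (s : edge_type e) : #|val s| <= 2.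
Proof. by case: (edge_endpoints s) => u [w [_ ->]]; rewrite cards2 ltnS leq_b1. Qed.

Lemma card_edge (s : edge_type e) : irreflexive e -> #|val s| = 2.
Proof.
move=> e_irr; case: (edge_endpoints s) => u [w [euw ->]]; rewrite cards2.
by case: eqP euw => // ->; rewrite e_irr.
Qed.

Lemma sum_edge_endpoints (f : T -> nat) :
  \sum_(s : edge_type e) \sum_(u in val s) f u = \sum_v deg v * f v.
Proof.
under [RHS]eq_bigr => v _ do rewrite /deg -sum_nat_const.
rewrite (exchange_big_dep predT) //=; apply: eq_bigr => s _.
by apply: eq_bigl => u; rewrite inE.
Qed.

Lemma handshake : irreflexive e -> \sum_v deg v = 2 * #|{: edge_type e}|.
Proof.
move=> e_irr; have := sum_edge_endpoints (fun=> 1); rewrite -sum1_card big_distrr /=.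
under eq_bigr => v _ do rewrite muln1.
move=> <-; apply: eq_bigr => s _; rewrite sum1_card muln1 card_edge //.
Qed.

Lemma deg_neighbours : simple_graph e -> forall v, deg v = #|[set w | e v w]|.
Proof.
case=> e_sym e_irr v.
have edge_of w : e v w -> is_edge e [set v; w].
  by move=> evw; apply/existsP; exists v; apply/existsP; exists w; rewrite evw eqxx.
have val_edges : val @: [set s : edge_type e | v \in val s]
                 = (fun w => [set v; w]) @: [set w | e v w].
  apply/setP => S; apply/imsetP/imsetP => [[s] | [w]]; rewrite inE.
  - case: (edge_endpoints s) => u [w [euw ->]] /set2P [] -> ->.
      by exists w; rewrite ?inE.
    by exists u; rewrite ?inE 1?e_sym // setUC.
  - by move=> evw ->; exists (exist (is_edge e) _ (edge_of w evw)); rewrite // inE set21.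
rewrite /deg -[LHS](card_imset _ val_inj) val_edges card_in_imset // => w1 w2.
rewrite !inE => evw1 _ /setP /(_ w1); rewrite !inE eqxx orbT => /esym /orP [] /eqP //.
by move=> w1v; move: evw1; rewrite w1v e_irr.
Qed.

End Degree.

Section ConstructionSequences.
Variables (T : finType) (e : rel T).
Implicit Type x : seqtype e.

Lemma pos_entry x i : injective x -> pos x (x i) = i.+1.
Proof. by move=> x_inj; rewrite /pos index_map // index_enum_ord. Qed.

Lemma cseq_bij x : cseq x -> bijective x.
Proof.
by case/andP => /injectiveP x_inj _; apply: inj_card_bij x_inj _; rewrite card_ord.
Qed.

Lemma cseq_pos_inj x : cseq x -> injective (pos x).
Proof.
move=> /cseq_bij [y xK yK] a b; have x_inj := can_inj xK.
by rewrite -(yK a) -(yK b) !pos_entry // => -[/val_inj ->].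
Qed.

Lemma cseq_sum_pos x : cseq x -> (\sum_a pos x a) * 2 = ell e * (ell e).+1.
Proof.
move=> /cseq_bij x_bij; rewrite (reindex x); last exact: onW_bij.
rewrite -sum_succ_ord; congr (_ * _); apply: eq_bigr => i _.
by rewrite pos_entry //; exact: bij_inj.
Qed.

Lemma cseq_pos_lt x (s : edge_type e) u :
  cseq x -> u \in val s -> pos x (inl u) < pos x (inr s).
Proof. by case/andP => _ /forallP /(_ s) /forallP /(_ u) /implyP. Qed.

Lemma cseq_sum_endpoints_leq x (s : edge_type e) :
  cseq x -> \sum_(u in val s) pos x (inl u) <= 2 * pos x (inr s).
Proof.
move=> x_cseq; apply: leq_trans (leq_mul (card_edge_le2 s) (leqnn _)).
rewrite -sum_nat_const; apply: leq_sum => u us.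
exact/ltnW/cseq_pos_lt.
Qed.

Lemma cost_vertex_identity x : cseq x ->
  cost x + \sum_v (deg e v).+2 * pos x (inl v) = ell e * (ell e).+1.
Proof.
move=> x_cseq.
have edge_sum : cost x + \sum_v deg e v * pos x (inl v)
                = 2 * \sum_(s : edge_type e) pos x (inr s).
  rewrite -sum_edge_endpoints /cost -big_split big_distrr /=; apply: eq_bigr => s _.
  by rewrite subnK // cseq_sum_endpoints_leq.
have := cseq_sum_pos x_cseq; rewrite big_sumType /= => <-.
under eq_bigr => v _ do rewrite -addn2 mulnDl.
rewrite big_split /= -big_distrr /= addnA edge_sum.
by rewrite mulnDl addnC !(mulnC _ 2).
Qed.

End ConstructionSequences.

Section VertexFirst.
Variables (T : finType) (e : rel T) (vs : seq T) (v0 : T).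
Hypotheses (vs_uniq : uniq vs) (vs_total : forall v, v \in vs).

Definition vertex_first_list : seq (elt e) :=
  map inl vs ++ map inr (enum {: edge_type e}).

(* [v0] only pads [nth]: every index below [ell e] is in range. *)
Definition vertex_first : seqtype e :=
  [ffun i : 'I_(ell e) => nth (inl v0) vertex_first_list i].

Lemma size_vertex_order : size vs = #|T|.
Proof. by rewrite -(card_uniqP vs_uniq); apply: eq_card. Qed.

Lemma vertex_first_list_uniq : uniq vertex_first_list.
Proof.
have inl_inj : injective (@inl T (edge_type e)) by move=> ? ? [].
have inr_inj : injective (@inr T (edge_type e)) by move=> ? ? [].
rewrite cat_uniq (map_inj_uniq inl_inj) (map_inj_uniq inr_inj) vs_uniq enum_uniq andbT.
by apply/hasPn => _ /mapP [s _ ->]; apply/mapP => -[].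
Qed.

Lemma size_vertex_first_list : size vertex_first_list = ell e.
Proof.
by rewrite size_cat !size_map size_vertex_order /ell card_sum [#|{: edge_type e}|]cardT enumT.
Qed.

Lemma vertex_first_enum : [seq vertex_first i | i <- enum 'I_(ell e)] = vertex_first_list.
Proof.
rewrite -[RHS](mkseq_nth (inl v0)) size_vertex_first_list /mkseq -val_enum_ord -map_comp.
by apply: eq_map => i; rewrite /= ffunE.
Qed.

Lemma pos_vertex_first_inl v : pos vertex_first (inl v) = (index v vs).+1.
Proof.
rewrite /pos vertex_first_enum /vertex_first_list index_cat map_f //.
by rewrite index_map // => ? ? [].
Qed.

Lemma pos_vertex_first_inr s : #|T| < pos vertex_first (inr s).
Proof.
rewrite /pos vertex_first_enum /vertex_first_list index_cat size_map size_vertex_order.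
by case: ifP => [/mapP [] //|_]; rewrite ltnS leq_addr.
Qed.

Lemma vertex_first_cseq : cseq vertex_first.
Proof.
apply/andP; split.
  apply/injectiveP => i j; rewrite !ffunE => /eqP.
  by rewrite nth_uniq ?size_vertex_first_list ?vertex_first_list_uniq // => /eqP /val_inj.
apply/forallP => s; apply/forallP => u; apply/implyP => _.
apply: leq_trans (pos_vertex_first_inr s).
by rewrite pos_vertex_first_inl ltnS -size_vertex_order index_mem.
Qed.

Lemma vertex_first_sum_pos_inl :
  \sum_v pos vertex_first (inl v) = \sum_(k < #|T|) k.+1.
Proof.
rewrite (eq_bigl (fun v => v \in vs)) => [|v]; last by rewrite vs_total.
rewrite -(big_uniq _ vs_uniq) (big_nth v0) big_mkord.
rewrite size_vertex_order; apply: eq_bigr => k _.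
by rewrite pos_vertex_first_inl index_uniq // size_vertex_order.
Qed.

End VertexFirst.

Section DoubleStar.
Variable n : nat.
Local Notation G := (double_star n).

Lemma sum_ds_vertex (F : ds_vertex n -> nat) :
  \sum_v F v = \sum_b (F (b, None) + \sum_i F (b, Some i)).
Proof.
transitivity (\sum_b \sum_o F (b, o)); first by rewrite pair_bigA; apply: eq_bigr => -[].
by apply: eq_bigr => b _; rewrite big_option.
Qed.

Lemma card_ds_vertex : #|{: ds_vertex n}| = 2 * n + 2.
Proof. by rewrite card_prod card_option card_bool card_ord; lia. Qed.

Lemma card_neighbours_double_star (v : ds_vertex n) :
  #|[set w | G v w]| = \sum_b ((G v (b, None) : nat) + \sum_i G v (b, Some i)).
Proof.
rewrite -sum1_card big_mkcond /= sum_ds_vertex.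
apply: eq_bigr => b _; rewrite inE; congr (_ + _).
by apply: eq_bigr => i _; rewrite inE; case: ifP.
Qed.

Lemma deg_double_star v : deg G v = if v.2 is None then n.+1 else 1.
Proof.
rewrite (deg_neighbours (double_star_simple n)) card_neighbours_double_star.
rewrite big_bool /double_star.
by case: v => [[] [i|]]; rewrite /= !sum_nat_const card_ord; lia.
Qed.

Lemma card_double_star_edges : #|{: edge_type G}| = 2 * n + 1.
Proof.
have := handshake (snd (double_star_simple n)).
under eq_bigr => v _ do rewrite deg_double_star.
by rewrite sum_ds_vertex big_bool /= !sum_nat_const card_ord; lia.
Qed.

Lemma ell_double_star : ell G = 4 * n + 3.
Proof. by rewrite /ell card_sum card_ds_vertex card_double_star_edges; lia. Qed.

Lemma sum_weighted_deg_double_star (f : ds_vertex n -> nat) :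
  \sum_v (deg G v).+2 * f v = 3 * \sum_v f v + n * (f (false, None) + f (true, None)).
Proof.
under eq_bigr => v _ do rewrite deg_double_star.
rewrite !sum_ds_vertex !big_bool /= -!big_distrr /=; lia.
Qed.

Lemma double_star_cost_leq (x : seqtype G) :
  cseq x -> cost x <= 10 * n ^ 2 + 10 * n + 3.
Proof.
move=> x_cseq; have := cost_vertex_identity x_cseq.
rewrite sum_weighted_deg_double_star ell_double_star.
have pos_inj := cseq_pos_inj x_cseq.
have inl_pos_inj : injective (fun v => pos x (inl v)) by move=> u v /pos_inj [].
have V_geq : \sum_(k < #|{: ds_vertex n}|) k.+1 <= \sum_v pos x (inl v).
  exact: sum_inj_pos_geq inl_pos_inj (fun=> ltn0Sn _).
have H_geq : 3 <= pos x (inl (false, None)) + pos x (inl (true, None)).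
  have : pos x (inl (false, None)) != pos x (inl (true, None)) by apply/eqP => /pos_inj.
  rewrite /pos; lia.
move: V_geq H_geq (sum_succ_ord #|{: ds_vertex n}|); rewrite card_ds_vertex.
set V := \sum_v _; set S := \sum_(k < _) _; set H := _ + _; nia.
Qed.

Definition hubs_first : seq (ds_vertex n) :=
  (false, None) :: (true, None) :: [seq v <- enum {: ds_vertex n} | v.2 != None].

Lemma hubs_first_uniq : uniq hubs_first.
Proof. by rewrite /= !mem_filter /= filter_uniq ?enum_uniq // inE mem_filter. Qed.

Lemma hubs_first_total v : v \in hubs_first.
Proof. by case: v => [[] [i|]]; rewrite !in_cons mem_filter mem_enum ?eqxx ?orbT. Qed.

Lemma hubs_first_cseq : cseq (vertex_first G hubs_first (false, None)).
Proof. exact: (vertex_first_cseq G (false, None) hubs_first_uniq hubs_first_total). Qed.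

Lemma double_star_cost_hubs_first :
  cost (vertex_first G hubs_first (false, None)) = 10 * n ^ 2 + 10 * n + 3.
Proof.
have := cost_vertex_identity hubs_first_cseq.
rewrite sum_weighted_deg_double_star ell_double_star.
rewrite (vertex_first_sum_pos_inl G (false, None) hubs_first_uniq hubs_first_total).
rewrite !(pos_vertex_first_inl G (false, None) hubs_first_uniq hubs_first_total) /=.
have := sum_succ_ord #|{: ds_vertex n}|; rewrite card_ds_vertex.
set S := \sum_(k < _) _; nia.
Qed.

End DoubleStar.

Unset Implicit Arguments.

Theorem theorem6 (n : nat) :
  1 <= n -> nu_star (double_star n) = 10 * n ^ 2 + 10 * n + 3.
Proof.
(* The formula holds for n = 0 as well. *)
move=> _; apply/eqP; rewrite eqn_leq; apply/andP; split.
  by apply/bigmax_leqP => x; exact: double_star_cost_leq.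
rewrite -double_star_cost_hubs_first; apply: leq_bigmax_cond.
exact: hubs_first_cseq.
Qed.
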